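(* There is an absolute constant $C$ such that the following holds. Let $q$ be odd, $V$ an $n$-dimensional space over $\mathbb{F}_q$ with $n\ge 4$, $G$ one of $\mathrm{SL}(V),\mathrm{Sp}(V),\mathrm{SU}(V)$, $\mathcal T$ the set of transvections of $G$, and $X\subseteq\mathcal T$ a generating set of $G$ such that: (P2) ${}_VX$ spans $V$, $X_{V^*}$ spans $V^*$ and $\Gamma(X)$ is strongly connected; (P3) the weights of all cycles of $\Gamma(X)$ generate $\mathbb{F}_q$; (P4) if $G=\mathrm{Sp}(V)$, every cycle of $\Gamma(\mathcal T)$ is symplectic; (P5) if $G=\mathrm{SL}(V)$ and $q$ is a square, $\Gamma(X)$ contains a non-unitary cycle. Then there is a set $X'$ with $X\subseteq X'\subseteq\mathcal T$ and $\ell_X(X')\le Cn$ such that for any $s,t\in\mathcal T$ for which $[s,t]$ is not an edge of $\Gamma(\mathcal T)$ there is $r\in X'$ with $[s,r]$ and $[r,t]$ edges of $\Gamma(\mathcal T)$. In particular the directed diameter of $\Gamma(X'')$ is at most $2$ for every $X'\subseteq X''\subseteq\mathcal T$.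
   Context: $\mathrm{Sp}(V)$, $\mathrm{SU}(V)$: isometry groups (determinant one in the unitary case) of a non-degenerate alternating, resp. hermitian (w.r.t. $\lambda\mapsto\lambda^{\sqrt q}$, $q$ square) form. Transvections: $s=1+u_s\otimes\phi_s$, $x\mapsto x+\phi_s(x)u_s$, $\phi_s(u_s)=0$. For $Y\subseteq\mathcal T$: ${}_VY=\{u_s:s\in Y\}$, $Y_{V^*}=\{\phi_s:s\in Y\}$ (up to scalars). $\Gamma(Y)$: directed graph on $Y$ with edge $[s,t]$ iff $\phi_t(u_s)\ne 0$. Weight $w(r_1,\dots,r_k)=\prod_i\phi_{r_{i+1}}(u_{r_i})$ (indices mod $k$); cycle: nonzero weight; symplectic: $w(r_1,\dots,r_k)+(-1)^{k+1}w(r_k,\dots,r_1)=0$; unitary: $w(r_1,\dots,r_k)+(-1)^{k+1}w(r_k,\dots,r_1)^{\sqrt q}=0$. $\ell_X(Y)=\min\{k: Y\subseteq(X\cup X^{-1}\cup\{1\})^k\}$. *)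

From HB Require Import structures.
From mathcomp Require Import all_boot all_order all_algebra.
Set Implicit Arguments. Unset Strict Implicit. Unset Printing Implicit Defensive.
Import GRing.Theory.
Local Open Scope ring_scope.

(* V = 'rV[F]_n (row vectors); linear maps are n x n matrices acting on the
   right: x |-> x *m g.  A linear form phi is a column vector f, phi(x) = x *m f. *)

Section Defs.
Variables (F : finFieldType) (n : nat).
Local Notation M := 'M[F]_n.

(* (u, f) is transvection data for s: s = 1 + u (x) phi, i.e.
   x *m s = x + (x *m f) *m u, with u <> 0, phi <> 0, phi(u) = 0. *)
Definition tdata (s : M) (u : 'rV[F]_n) (f : 'cV[F]_n) : bool :=
  [&& u != 0, f != 0, u *m f == 0 & s == 1%:M + f *m u].

Definition is_transvection (s : M) : bool :=
  [exists u, exists f, tdata s u f].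

(* a chosen representative (u_s, phi_s) (defined up to scalars) *)
Definition tpick (s : M) := [pick p : 'rV[F]_n * 'cV[F]_n | tdata s p.1 p.2].
Definition uvec (s : M) : 'rV[F]_n := if tpick s is Some p then p.1 else 0.
Definition fvec (s : M) : 'cV[F]_n := if tpick s is Some p then p.2 else 0.

Definition edge (s t : M) : bool :=
  [exists us, exists fs, exists ut, exists ft,
     [&& tdata s us fs, tdata t ut ft & us *m ft != 0]].

Definition weight (rs : seq M) : F :=
  \prod_(i < size rs)
     (uvec (nth 0 rs i) *m fvec (nth 0 rs (i.+1 %% size rs))) ord0 ord0.

Definition is_cycle (Y : {set M}) (rs : seq M) : bool :=
  [&& (0 < size rs)%N, all (mem Y) rs, uniq rs & weight rs != 0].

Definition symplectic_cycle (rs : seq M) : Prop :=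
  weight rs + (-1) ^+ (size rs).+1 * weight (rev rs) = 0.

(* unitary with respect to lambda |-> lambda ^+ r  (r = sqrt q) *)
Definition unitary_cycle (r : nat) (rs : seq M) : Prop :=
  weight rs + (-1) ^+ (size rs).+1 * (weight (rev rs)) ^+ r = 0.

Definition graph_rel (Y : {set M}) : rel M :=
  fun s t => [&& s \in Y, t \in Y & edge s t].

Definition strongly_connected (Y : {set M}) : Prop :=
  forall s t, s \in Y -> t \in Y -> connect (graph_rel Y) s t.

Definition spans_V (Y : {set M}) : Prop :=
  (1%:M <= \sum_(s in Y) <<uvec s>>)%MS.
Definition spans_Vdual (Y : {set M}) : Prop :=
  (1%:M <= \sum_(s in Y) <<(fvec s)^T>>)%MS.

Definition generates_field (S : F -> Prop) : Prop :=
  forall K : {pred F},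
    1 \in K ->
    (forall x y, x \in K -> y \in K -> x - y \in K) ->
    (forall x y, x \in K -> y \in K -> x * y \in K) ->
    (forall x, x \in K -> x^-1 \in K) ->
    (forall x, S x -> x \in K) ->
    forall x, x \in K.

Definition setmul (A B : {set M}) : {set M} := [set a *m b | a in A, b in B].
Definition symm_gen (X : {set M}) : {set M} :=
  X :|: [set invmx x | x in X] :|: [set 1%:M].
Definition ball (X : {set M}) (k : nat) : {set M} :=
  iter k (fun S => setmul S (symm_gen X)) [set 1%:M].

Definition ell_le (X Y : {set M}) (m : nat) : Prop :=
  exists k, (k <= m)%N /\ Y \subset ball X k.

Definition generates (X Gs : {set M}) : Prop :=
  exists k, ball X k = Gs.

End Defs.

Inductive gkind := KSL | KSp | KSU.

Section Groups.
Variables (F : finFieldType) (n : nat).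
Local Notation M := 'M[F]_n.

Definition frob (r : nat) (x : F) : F := x ^+ r.

(* standing assumptions on the form J (Gram matrix, B(x,y) = x J y^sigma^T) *)
Definition form_ok (k : gkind) (J : M) (r : nat) : Prop :=
  match k with
  | KSL => True
  | KSp => J^T = - J /\ (forall i, J i i = 0) /\ J \in unitmx
  | KSU => (r * r = #|F|)%N /\ J^T = map_mx (frob r) J /\ J \in unitmx
  end.

Definition inG (k : gkind) (J : M) (r : nat) (g : M) : bool :=
  match k with
  | KSL => \det g == 1
  | KSp => g *m J *m g^T == J
  | KSU => (g *m J *m (map_mx (frob r) g)^T == J) && (\det g == 1)
  end.

Definition Gset k J r : {set M} := [set g | inG k J r g].
Definition Tset k J r : {set M} := [set g in Gset k J r | is_transvection g].

End Groups.

From HB Require Import structures.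
From mathcomp Require Import all_boot all_order all_algebra fingroup pgroup abelian finfield.
From mathcomp Require Import zify.
Set Implicit Arguments. Unset Strict Implicit. Unset Printing Implicit Defensive.
Import GRing.Theory.
Local Open Scope ring_scope.

(** It suffices to find, for every pair of transvections s and t (adjacent or
not), a transvection z of X-length O(n) with phi_z(u_s) <> 0 and
phi_t(u_z) <> 0.  By (P2) there are y, x in X with phi_y(u_s) <> 0 and
phi_t(u_x) <> 0, and a path from y to x in Gamma(X); it can be taken of length
at most n, because successive breadth-first layers strictly enlarge the span of
their vectors u_w.  Walk along the path, starting from z = y: at an edge w -> x'
with phi_x'(u_z) <> 0, conjugating z by x'^i adds i phi_x'(u_z) phi(u_x') to
phi(u_z) and subtracts a multiple of i from phi_z(u_s), so as q is odd one of
i = 0, 1, 2 keeps both nonzero for the next functional phi.  Each step costs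
four letters, whence l_X(z) <= 1 + 4n <= 5n. *)

Section FiniteField.
Variable F : finFieldType.

Lemma card_finField_pchar_nat : [pchar F].-nat #|F|.
Proof.
have [p _ pF] := finPcharP F.
have /abelem_pgroup := fin_ring_pchar_abelem pF.
by rewrite /pgroup cardsT (eq_pnat _ (pcharf_eq pF)).
Qed.

Lemma odd_card_two_neq0 : odd #|F| -> 2%:R != 0 :> F.
Proof.
apply: contraTN => /eqP two0.
have pF2 : 2 \in [pchar F] by rewrite inE two0 eqxx.
have := card_finField_pchar_nat; rewrite (eq_pnat _ (pcharf_eq pF2)).
move/part_pnat_id; rewrite p_part => cardF.
rewrite -cardF oddX /=; case: (logn 2 _) cardF => // cardF.
by have := finNzRing_gt1 F; rewrite -cardF.
Qed.

Section Frobenius.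
Variable r : nat.
Hypothesis r2_card : (r * r = #|F|)%N.

Lemma frob_is_nmod_morphism : nmod_morphism (@frob F r).
Proof.
split=> [|x y]; rewrite /frob.
  rewrite expr0n; case: r r2_card => // card0.
  by have := finNzRing_gt1 F; rewrite -card0.
rewrite exprDn_pchar //; apply: pnat_dvd card_finField_pchar_nat.
by rewrite -r2_card dvdn_mulr.
Qed.

Lemma frob_is_monoid_morphism : monoid_morphism (@frob F r).
Proof. by split=> [|x y]; rewrite /frob ?expr1n ?exprMn. Qed.

Definition frob_rmorphism : {rmorphism F -> F} :=
  HB.pack (@frob F r)
    (GRing.isNmodMorphism.Build _ _ _ frob_is_nmod_morphism)
    (GRing.isMonoidMorphism.Build _ _ _ frob_is_monoid_morphism).

End Frobenius.
End FiniteField.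

Section GroupClosure.
Variables (F : finFieldType) (n : nat) (k : gkind) (J : 'M[F]_n) (r : nat).
Hypothesis formJ : form_ok k J r.
Implicit Types (g h P Q : 'M[F]_n) (sigma : 'M[F]_n -> 'M[F]_n).

Lemma twisted_form_mul sigma g h : {morph sigma : A B / A *m B} ->
  g *m J *m (sigma g)^T = J -> h *m J *m (sigma h)^T = J ->
  g *m h *m J *m (sigma (g *m h))^T = J.
Proof.
move=> sigmaM gJ hJ; rewrite sigmaM trmx_mul.
by rewrite -[in RHS]gJ -[in RHS]hJ !mulmxA.
Qed.

Lemma twisted_form_linv sigma P Q : {morph sigma : A B / A *m B} ->
  sigma 1%:M = 1%:M -> P *m Q = 1%:M ->
  Q *m J *m (sigma Q)^T = J -> P *m J *m (sigma P)^T = J.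
Proof.
move=> sigmaM sigma1 PQ QJ.
by rewrite -[in LHS]QJ -!mulmxA -trmx_mul -sigmaM !mulmxA PQ sigma1 trmx1 mul1mx mulmx1.
Qed.

Lemma inG1 : inG k J r 1%:M.
Proof.
case: k formJ => [_|_|[r2 _]] /=; rewrite ?det1 ?mul1mx ?trmx1 ?mulmx1 //.
by rewrite (map_mx1 (frob_rmorphism r2)) trmx1 mulmx1 !eqxx.
Qed.

Lemma inG_mul g h : inG k J r g -> inG k J r h -> inG k J r (g *m h).
Proof.
case: k formJ => [_|_|[r2 _]] /=.
- by move=> /eqP dg /eqP dh; rewrite det_mulmx dg dh mulr1.
- by move=> /eqP gJ /eqP hJ; apply/eqP; apply: (@twisted_form_mul id).
move=> /andP[/eqP gJ /eqP dg] /andP[/eqP hJ /eqP dh].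
rewrite det_mulmx dg dh mulr1 eqxx andbT; apply/eqP.
by apply: twisted_form_mul gJ hJ => A B; apply: (map_mxM (frob_rmorphism r2)).
Qed.

Lemma inG_linv P Q : P *m Q = 1%:M -> inG k J r Q -> inG k J r P.
Proof.
move=> PQ; have dPQ : \det P * \det Q = 1 by rewrite -det_mulmx PQ det1.
case: k formJ => [_|_|[r2 _]] /=.
- by move=> /eqP dQ; rewrite -dPQ dQ mulr1.
- by move=> /eqP QJ; apply/eqP; apply: (@twisted_form_linv id) QJ.
move=> /andP[/eqP QJ /eqP dQ]; rewrite -dPQ dQ mulr1 eqxx andbT; apply/eqP.
apply: twisted_form_linv PQ QJ; last exact: (map_mx1 (frob_rmorphism r2)).
by move=> A B; apply: (map_mxM (frob_rmorphism r2)).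
Qed.

End GroupClosure.

Section Transvections.
Variables (F : finFieldType) (n : nat).
Implicit Types (s t x z N P Q : 'M[F]_n) (u a : 'rV[F]_n) (f g : 'cV[F]_n).

Lemma mx11_eq0 (c : 'M[F]_1) : (c == 0) = (c 0 0 == 0).
Proof.
apply/eqP/eqP => [-> | c0]; first by rewrite mxE.
by rewrite [c]mx11_scalar c0; apply/matrixP => i j; rewrite !mxE mul0rn.
Qed.

Lemma mul_mx11_eq0 m (c : 'M[F]_1) (a : 'M[F]_(1, m)) :
  (c *m a == 0) = (c == 0) || (a == 0).
Proof. by rewrite {1}[c]mx11_scalar mul_scalar_mx scaler_eq0 mx11_eq0. Qed.

Lemma mul_mx_mx11_eq0 m (a : 'M[F]_(m, 1)) (c : 'M[F]_1) :
  (a *m c == 0) = (a == 0) || (c == 0).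
Proof. by rewrite {1}[c]mx11_scalar mul_mx_scalar scaler_eq0 mx11_eq0 orbC. Qed.

Lemma tdataP s u f : tdata s u f ->
  [/\ u != 0, f != 0, u *m f = 0 & s = 1%:M + f *m u].
Proof. by case/and4P => -> -> /eqP-> /eqP->. Qed.

Lemma tdata_transvection s u f : tdata s u f -> is_transvection s.
Proof. by move=> suf; apply/existsP; exists u; apply/existsP; exists f. Qed.

Lemma tdata_pick s : is_transvection s -> tdata s (uvec s) (fvec s).
Proof.
rewrite /uvec /fvec /tpick; case: pickP => [//|none].
by case/existsP => u /existsP[f suf]; have := none (u, f); rewrite suf.
Qed.

(* The data (u, f) of a transvection are determined up to a scalar factor. *)
Lemma tdata_row_pairing s u f u' f' (w : 'rV[F]_n) :
  tdata s u f -> tdata s u' f' -> (w *m f == 0) = (w *m f' == 0).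
Proof.
wlog suff: u f u' f' / tdata s u f -> tdata s u' f' -> w *m f == 0 -> w *m f' == 0.
  by move=> imp suf suf'; apply/idP/idP; [apply: imp suf suf' | apply: imp suf' suf].
move=> /tdataP[_ _ _ ->] /tdataP[u'0 _ _ /addrI fu] /eqP wf0.
have : (w *m f') *m u' == 0 by rewrite -mulmxA -fu mulmxA wf0 mul0mx.
by rewrite mul_mx11_eq0 (negPf u'0) orbF.
Qed.

Lemma tdata_col_pairing s u f u' f' (w : 'cV[F]_n) :
  tdata s u f -> tdata s u' f' -> (u *m w == 0) = (u' *m w == 0).
Proof.
wlog suff: u f u' f' / tdata s u f -> tdata s u' f' -> u *m w == 0 -> u' *m w == 0.
  by move=> imp suf suf'; apply/idP/idP; [apply: imp suf suf' | apply: imp suf' suf].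
move=> /tdataP[_ _ _ ->] /tdataP[_ f'0 _ /addrI fu] /eqP uw0.
have : f' *m (u' *m w) == 0 by rewrite mulmxA -fu -mulmxA uw0 mulmx0.
by rewrite mul_mx_mx11_eq0 (negPf f'0).
Qed.

Lemma tdata_edge s t us fs ut ft :
  tdata s us fs -> tdata t ut ft -> us *m ft != 0 -> edge s t.
Proof.
move=> sd td ne; apply/existsP; exists us; apply/existsP; exists fs.
by apply/existsP; exists ut; apply/existsP; exists ft; rewrite sd td ne.
Qed.

Lemma edgeE s t : is_transvection s -> is_transvection t ->
  edge s t = (uvec s *m fvec t != 0).
Proof.
move=> /tdata_pick sd /tdata_pick td; apply/idP/idP; last exact: tdata_edge sd td.
case/existsP => us /existsP[fs /existsP[ut /existsP[ft /and3P[sd' td']]]].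
by rewrite (tdata_col_pairing _ sd' sd) (tdata_row_pairing _ td' td).
Qed.

Section SquareZero.
Variable N : 'M[F]_n.
Hypothesis N2 : N *m N = 0.

Lemma sqr0_mulDB c : (1%:M + c *: N) *m (1%:M - c *: N) = 1%:M.
Proof.
rewrite mulmxDl mulmxBr !mul1mx mulmxBr mulmx1 -scalemxAr -scalemxAl.
by rewrite scalerA N2 scaler0 subr0 subrK.
Qed.

Lemma sqr0_mulBD c : (1%:M - c *: N) *m (1%:M + c *: N) = 1%:M.
Proof. by have := sqr0_mulDB (- c); rewrite !scaleNr opprK. Qed.

(* ['M_n] is a ring only when [n] is a successor, hence explicit powers. *)
Definition mxpow (A : 'M[F]_n) k := iter k (mulmxr A) 1%:M.

Lemma sqr0_mxpow k : mxpow (1%:M + N) k = 1%:M + k%:R *: N.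
Proof.
elim: k => [|k IHk]; first by rewrite scale0r addr0.
rewrite /= -/(mxpow _ k) IHk mulmxDl mul1mx mulmxDr mulmx1 -scalemxAl N2.
by rewrite scaler0 addr0 -addrA -[k.+1]addn1 natrD scalerDl scale1r [N + _]addrC.
Qed.

End SquareZero.

Lemma tdata_sqr0 x a g : tdata x a g -> (g *m a) *m (g *m a) = 0.
Proof. by case/tdataP => _ _ ag _; rewrite mulmxA -(mulmxA g) ag mulmx0 mul0mx. Qed.

Lemma tdata_mulV x a g : tdata x a g -> x *m (1%:M - g *m a) = 1%:M.
Proof.
move=> xd; have [_ _ _ ->] := tdataP xd.
by have := sqr0_mulDB (tdata_sqr0 xd) 1; rewrite !scale1r.
Qed.

Lemma tdata_unitmx x a g : tdata x a g -> x \in unitmx.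
Proof. by move/tdata_mulV/mulmx1_unit => []. Qed.

Lemma invmx_tdata x a g : tdata x a g -> invmx x = 1%:M - g *m a.
Proof.
move=> xd; have := congr1 (mulmx (invmx x)) (tdata_mulV xd).
by rewrite mulmxA mulVmx ?(tdata_unitmx xd) // mul1mx mulmx1 => ->.
Qed.

Lemma tdata_conj z u f P Q : P *m Q = 1%:M -> tdata z u f ->
  tdata (P *m z *m Q) (u *m Q) (P *m f).
Proof.
move=> PQ /tdataP[u0 f0 uf ->]; have QP := mulmx1C PQ.
apply/and4P; split.
- by apply: contra u0 => /eqP uQ0; rewrite -[u]mulmx1 -QP mulmxA uQ0 mul0mx.
- by apply: contra f0 => /eqP Pf0; rewrite -[f]mul1mx -QP -mulmxA Pf0 mulmx0.
- by rewrite mulmxA -(mulmxA u) QP mulmx1 uf.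
- by rewrite mulmxDr mulmx1 mulmxDl PQ !mulmxA.
Qed.

Lemma tdata_conj_mxpow z u f x a g k : tdata x a g -> tdata z u f ->
  tdata (mxpow (invmx x) k *m z *m mxpow x k)
        (u *m (1%:M + k%:R *: (g *m a))) ((1%:M - k%:R *: (g *m a)) *m f).
Proof.
move=> xd zd; have N2 := tdata_sqr0 xd.
have Nm2 : (- (g *m a)) *m (- (g *m a)) = 0 by rewrite mulNmx mulmxN opprK.
have [_ _ _ ex] := tdataP xd.
rewrite (invmx_tdata xd) ex sqr0_mxpow // -[_ - _]/(1%:M + - _) sqr0_mxpow //.
by rewrite scalerN; apply: tdata_conj zd; apply: sqr0_mulBD.
Qed.

End Transvections.

Section Balls.
Variables (F : finFieldType) (n : nat) (X : {set 'M[F]_n}).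
Implicit Types (x y z A : 'M[F]_n).

Lemma mem_setmul (S T : {set 'M[F]_n}) y z :
  y \in S -> z \in T -> y *m z \in setmul S T.
Proof. by move=> yS zT; apply/imset2P; exists y z. Qed.

Lemma symm_gen1 : 1%:M \in symm_gen X.
Proof. by rewrite !inE eqxx !orbT. Qed.

Lemma symm_genX x : x \in X -> x \in symm_gen X.
Proof. by rewrite !inE => ->. Qed.

Lemma symm_genV x : x \in X -> invmx x \in symm_gen X.
Proof. by move=> xX; rewrite !inE imset_f ?orbT. Qed.

Lemma ball_mul i j y z : y \in ball X i -> z \in ball X j -> y *m z \in ball X (i + j).
Proof.
move=> yB; elim: j z => [|j IHj] z; first by rewrite inE addn0 => /eqP->; rewrite mulmx1.
by rewrite addnS => /imset2P[z1 z2 z1B z2S ->]; rewrite mulmxA mem_setmul ?IHj.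
Qed.

Lemma ball1 j : 1%:M \in ball X j.
Proof.
by elim: j => [|j IHj]; rewrite ?inE // -[1%:M]mulmx1 mem_setmul ?symm_gen1.
Qed.

Lemma mem_ball1 x : x \in X -> x \in ball X 1.
Proof.
by move=> xX; rewrite -[x]mul1mx; apply: mem_setmul; [apply: set11 | apply: symm_genX].
Qed.

Lemma ball_mono i j : (i <= j)%N -> ball X i \subset ball X j.
Proof.
move=> le_ij; apply/subsetP => y yB.
by rewrite -(subnKC le_ij) -[y]mulmx1 ball_mul ?ball1.
Qed.

Lemma mxpow_ball A i : A \in symm_gen X -> mxpow A i \in ball X i.
Proof. by move=> AS; elim: i => [|i IHi]; rewrite ?inE // mem_setmul. Qed.

Lemma ball_subG k J r j : form_ok k J r -> X \subset Tset k J r ->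
  ball X j \subset Gset k J r.
Proof.
move=> formJ XT; have XGT x : x \in X -> inG k J r x && is_transvection x.
  by move/(subsetP XT); rewrite !inE.
elim: j => [|j IHj]; apply/subsetP => w; first by rewrite !inE => /eqP->; apply: inG1.
case/imset2P => y x yB xS ->; rewrite inE; apply: (inG_mul formJ (g := y)).
  by have := subsetP IHj _ yB; rewrite inE.
case/setUP: xS => [/setUP[/XGT/andP[] // | /imsetP[x' /XGT/andP[x'G x'T] ->]] | /set1P->].
  by apply: (inG_linv formJ (mulVmx (tdata_unitmx (tdata_pick x'T)))).
exact: inG1.
Qed.

End Balls.

Lemma exists_shift_neq0 (K : fieldType) (V : lmodType K) (a b d e : V) :
  2%:R != 0 :> K -> b != 0 -> d != 0 ->
  exists2 i, (i <= 2)%N & (a + i%:R *: b != 0) && (d - i%:R *: e != 0).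
Proof.
move=> two0 b0 d0; have [a0|] := eqVneq a 0; last first.
  by exists 0%N; rewrite // !scale0r addr0 subr0 d0 andbT.
have [ed|] := eqVneq e d; last first.
  by exists 1%N; rewrite // a0 add0r !scale1r b0 subr_eq0 eq_sym.
exists 2%N; rewrite // a0 add0r scaler_eq0 negb_or two0 b0 ed /=.
by rewrite scaler_nat mulr2n opprD addrA subrr add0r oppr_eq0.
Qed.

Section Conjugation.
Variables (F : finFieldType) (n : nat) (X : {set 'M[F]_n}).
Hypothesis two0 : 2%:R != 0 :> F.

Lemma conj_step z u f x a g j (psi : 'cV[F]_n) (v : 'rV[F]_n) :
  z \in ball X j -> tdata z u f -> x \in X -> tdata x a g ->
  u *m g != 0 -> a *m psi != 0 -> v *m f != 0 ->
  exists z' u' f',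
    [/\ z' \in ball X (j + 4), tdata z' u' f', v *m f' != 0 & u' *m psi != 0].
Proof.
move=> zB zd xX xd ug0 apsi0 vf0.
have uga0 : (u *m g) *m (a *m psi) != 0 by rewrite mul_mx11_eq0 negb_or ug0.
have [i le_i2 /andP[u'psi0 vf'0]] :=
  exists_shift_neq0 (u *m psi) ((v *m g) *m (a *m f)) two0 uga0 vf0.
exists (mxpow (invmx x) i *m z *m mxpow x i); do 2 eexists; split.
- have le_radius : (i + j + i <= j + 4)%N by lia.
  apply: (subsetP (ball_mono X le_radius)).
  by rewrite !ball_mul ?mxpow_ball ?symm_genV ?symm_genX.
- exact: tdata_conj_mxpow xd zd.
- rewrite mulmxA mulmxBr mulmx1 mulmxBl -scalemxAr -scalemxAl !mulmxA.
  by rewrite -[v *m g *m a *m f]mulmxA.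
- rewrite mulmxDr mulmx1 mulmxDl -scalemxAr -scalemxAl !mulmxA.
  by rewrite -[u *m g *m a *m psi]mulmxA.
Qed.

End Conjugation.

Section Reachability.
Variables (F : finFieldType) (n : nat) (X : {set 'M[F]_n}) (y : 'M[F]_n).
Hypothesis XT : {in X, forall x, is_transvection x}.
Hypothesis yX : y \in X.

Definition reach_step (R : {set 'M[F]_n}) : {set 'M[F]_n} :=
  R :|: [set x in X | [exists w in R, graph_rel X w x]].

Definition reach j := iter j reach_step [set y].

Lemma reachS j : reach j.+1 = reach_step (reach j).
Proof. by []. Qed.

Lemma reach_sub j : reach j \subset reach j.+1.
Proof. exact: subsetUl. Qed.

Lemma reach_mono i j : (i <= j)%N -> reach i \subset reach j.
Proof.
move/subnKC <-; elim: (j - i)%N => [|m IHm]; first by rewrite addn0.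
by rewrite addnS (subset_trans IHm) ?reach_sub.
Qed.

Lemma reach_edge j w x : w \in reach j -> graph_rel X w x -> x \in reach j.+1.
Proof.
move=> wR wx; have /and3P[_ xX _] := wx.
by rewrite reachS !inE xX; apply/orP; right; apply/existsP; exists w; rewrite wR.
Qed.

Lemma reach_subX j : reach j \subset X.
Proof.
elim: j => [|j IHj]; first by rewrite sub1set.
by rewrite reachS subUset IHj; apply/subsetP => x; rewrite inE => /andP[].
Qed.

Lemma reach_path p : path (graph_rel X) y p -> last y p \in reach (size p).
Proof.
elim/last_ind: p => [|p w IHp]; first by rewrite inE.
rewrite rcons_path last_rcons size_rcons => /andP[/IHp lastR].
exact: reach_edge.
Qed.

Lemma reach_stable j m : reach j.+1 = reach j -> reach (m + j) = reach j.
Proof. by move=> stable; elim: m => //= m; rewrite -/(reach (m + j)) => ->. Qed.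

Definition reach_span j := (\sum_(w in reach j) <<uvec w>>)%MS.

Lemma uvec_sub_reach_span j w : w \in reach j -> (uvec w <= reach_span j)%MS.
Proof. by move=> wR; rewrite (sumsmx_sup w) ?genmxE. Qed.

Lemma reach_span_mono j : (reach_span j <= reach_span j.+1)%MS.
Proof.
apply/sumsmx_subP => w wR; rewrite genmxE uvec_sub_reach_span //.
exact: subsetP (reach_sub j) _ wR.
Qed.

(* A vertex first reached at step [j + 2] is not adjacent from [reach j], so
   [phi_x] kills [reach_span j] but not the [u_w] of its predecessor. *)
Lemma reach_span_ltmx j :
  reach j.+2 != reach j.+1 -> (reach_span j < reach_span j.+1)%MS.
Proof.
move=> grow; have /subsetPn[x xR2 xR1] : ~~ (reach j.+2 \subset reach j.+1).
  by apply: contra grow => sub; rewrite eqEsubset sub reach_sub.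
move: xR2; rewrite reachS inE (negPf xR1) /= inE.
case/andP => xX /existsP[w /andP[wR1 wx]].
have XR i : {subset reach i <= X} by apply/subsetP/reach_subX.
have span_ker : (reach_span j <= kermx (fvec x))%MS.
  apply/sumsmx_subP => w' w'R; rewrite genmxE sub_kermx; apply: contraR xR1 => w'x.
  have w'X := XR j w' w'R; apply: (reach_edge w'R).
  by rewrite /graph_rel w'X xX edgeE ?XT.
have wx0 : uvec w *m fvec x != 0.
  by case/and3P: wx => wX _; rewrite -edgeE ?XT.
rewrite ltmxE reach_span_mono /=; apply: contra wx0 => span_sub.
rewrite -sub_kermx (submx_trans (uvec_sub_reach_span (j := j.+1) wR1)) //.
exact: submx_trans span_sub span_ker.
Qed.

Lemma rank_reach_span j : reach j.+1 != reach j -> (j < \rank (reach_span j))%N.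
Proof.
elim: j => [|j IHj] grow.
  have [y0 _ _ _] := tdataP (tdata_pick (XT yX)).
  have := mxrankS (uvec_sub_reach_span (j := 0) (set11 y)).
  by rewrite rank_rV y0.
have grow' : reach j.+1 != reach j.
  apply: contra grow => /eqP stable.
  by rewrite -[j.+2]/(2 + j)%N -[j.+1]/(1 + j)%N !reach_stable.
exact: leq_ltn_trans (IHj grow') (rank_ltmx (reach_span_ltmx grow)).
Qed.

Lemma reach_sub_n j : reach j \subset reach n.
Proof.
have stable : reach n.+1 = reach n.
  by apply/eqP; apply: contraT => /rank_reach_span; rewrite ltnNge rank_leq_col.
have [le_jn|lt_nj] := leqP j n; first exact: reach_mono.
by rewrite -(subnK (ltnW lt_nj)) reach_stable.
Qed.

Lemma connect_reach x : connect (graph_rel X) y x -> x \in reach n.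
Proof. by case/connectP => p yp ->; apply: subsetP (reach_sub_n _) _ (reach_path yp). Qed.

End Reachability.

Section Bridge.
Variables (F : finFieldType) (n : nat) (X : {set 'M[F]_n}).
Hypothesis XT : {in X, forall x, is_transvection x}.
Hypothesis two0 : 2%:R != 0 :> F.

Lemma spans_V_exists (phi : 'cV[F]_n) : spans_V X -> phi != 0 ->
  exists2 s, s \in X & uvec s *m phi != 0.
Proof.
move=> spanX phi0.
have /existsP[s /andP[sX ne0]] : [exists s in X, uvec s *m phi != 0]; last by exists s.
apply: contraNT phi0 => /existsPn none; rewrite -(mul1mx phi) -sub_kermx.
apply: submx_trans spanX _; apply/sumsmx_subP => s sX.
by have := none s; rewrite genmxE sub_kermx sX negbK.
Qed.

Lemma spans_Vdual_exists (v : 'rV[F]_n) : spans_Vdual X -> v != 0 ->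
  exists2 s, s \in X & v *m fvec s != 0.
Proof.
move=> spanX v0.
have /existsP[s /andP[sX ne0]] : [exists s in X, v *m fvec s != 0]; last by exists s.
apply: contraNT v0 => /existsPn none; rewrite -trmx_eq0 -(mul1mx v^T) -sub_kermx.
apply: submx_trans spanX _; apply/sumsmx_subP => s sX.
by have := none s; rewrite genmxE sub_kermx -trmx_mul trmx_eq0 sX negbK.
Qed.

Lemma reach_bridge y (v : 'rV[F]_n) j x (psi : 'cV[F]_n) :
  y \in X -> v *m fvec y != 0 -> x \in reach X y j -> uvec x *m psi != 0 ->
  exists z u f,
    [/\ z \in ball X (1 + 4 * j), tdata z u f, v *m f != 0 & u *m psi != 0].
Proof.
move=> yX vy0; elim: j x psi => [|j IHj] x psi.
  rewrite inE => /eqP-> ypsi0; exists y, (uvec y), (fvec y).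
  split; rewrite ?tdata_pick ?XT //.
  by rewrite muln0 addn0 mem_ball1.
have XR : {subset reach X y j <= X} by apply/subsetP/reach_subX.
have radius_step : (1 + 4 * j + 4 = 1 + 4 * j.+1)%N by lia.
have radius_mono : ball X (1 + 4 * j) \subset ball X (1 + 4 * j.+1).
  by apply: ball_mono; rewrite -radius_step leq_addr.
rewrite reachS inE => /orP[xR xpsi0 | ].
  have [z [u [f [zB zd vf0 upsi0]]]] := IHj x psi xR xpsi0.
  by exists z, u, f; rewrite (subsetP radius_mono).
rewrite inE => /andP[xX /existsP[w /andP[wR /and3P[_ _ wx]]]] xpsi0.
have wx0 : uvec w *m fvec x != 0 by rewrite -edgeE ?XT ?(XR w wR).
have [z [u [f [zB zd vf0 ux0]]]] := IHj w (fvec x) wR wx0.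
have [z' [u' [f' [z'B z'd vf'0 u'psi0]]]] :=
  conj_step two0 zB zd xX (tdata_pick (XT xX)) ux0 xpsi0 vf0.
by exists z', u', f'; rewrite -radius_step.
Qed.

Lemma bridge_transvection (v : 'rV[F]_n) (phi : 'cV[F]_n) :
  spans_V X -> spans_Vdual X -> strongly_connected X -> v != 0 -> phi != 0 ->
  exists z u f,
    [/\ z \in ball X (1 + 4 * n), tdata z u f, v *m f != 0 & u *m phi != 0].
Proof.
move=> spanV spanVd connX v0 phi0.
have [y yX vy0] := spans_Vdual_exists spanVd v0.
have [x xX xphi0] := spans_V_exists spanV phi0.
exact: reach_bridge yX vy0 (connect_reach XT yX (connX y x yX xX)) xphi0.
Qed.

End Bridge.

Theorem lemma4p1 :
  exists C : nat,
  forall (F : finFieldType) (n : nat) (k : gkind) (J : 'M[F]_n) (r : nat),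
    odd #|F| -> (4 <= n)%N -> form_ok k J r ->
  forall X : {set 'M[F]_n},
    X \subset Tset k J r ->
    generates X (Gset k J r) ->
    (* (P2) *)
    spans_V X -> spans_Vdual X -> strongly_connected X ->
    (* (P3) *)
    generates_field (fun w => exists rs, is_cycle X rs /\ w = weight rs) ->
    (* (P4) *)
    (k = KSp -> forall rs, is_cycle (Tset k J r) rs -> symplectic_cycle rs) ->
    (* (P5) *)
    (k = KSL -> forall r' : nat, (r' * r' = #|F|)%N ->
       exists rs, is_cycle X rs /\ ~ unitary_cycle r' rs) ->
  exists X' : {set 'M[F]_n},
    [/\ X \subset X', X' \subset Tset k J r, ell_le X X' (C * n),
        (forall s t, s \in Tset k J r -> t \in Tset k J r -> ~~ edge s t ->
           exists2 x, x \in X' & edge s x && edge x t)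
      & (forall X'' : {set 'M[F]_n}, X' \subset X'' -> X'' \subset Tset k J r ->
           forall s t, s \in X'' -> t \in X'' ->
             s = t \/ edge s t \/ exists2 x, x \in X'' & edge s x && edge x t)].
Proof.
exists 5%N => F n k J r oddF le4n formJ X XT _ spanV spanVd connX _ _ _.
have TT s : s \in Tset k J r -> is_transvection s by rewrite inE => /andP[].
have XT' : {in X, forall x, is_transvection x} by move=> x /(subsetP XT)/TT.
have n_gt0 : (0 < n)%N by apply: leq_trans le4n.
have radius : (1 + 4 * n <= 5 * n)%N by rewrite mulSn leq_add2r.
pose X' := Tset k J r :&: ball X (5 * n).
have bridge s t : s \in Tset k J r -> t \in Tset k J r ->
    exists2 z, z \in X' & edge s z && edge z t.
  move=> /TT/tdata_pick sd /TT/tdata_pick td.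
  have [[us0 _ _ _] [_ ft0 _ _]] := (tdataP sd, tdataP td).
  have [z [u [f [zB zd sz tz]]]] :=
    bridge_transvection XT' (odd_card_two_neq0 oddF) spanV spanVd connX us0 ft0.
  exists z; last by rewrite (tdata_edge sd zd) ?(tdata_edge zd td).
  rewrite inE (subsetP (ball_mono X radius)) // andbT inE.
  by rewrite (subsetP (ball_subG _ formJ XT) _ zB) (tdata_transvection zd).
exists X'; split=> [||||X'' X'X'' X''T s t sX'' tX''].
- apply/subsetP => x xX; rewrite inE (subsetP XT) //.
  by rewrite (subsetP (ball_mono X (leq_trans (leq_addr _ _) radius))) ?mem_ball1.
- exact: subsetIl.
- by exists (5 * n)%N; rewrite subsetIr.
- by move=> s t sT tT _; apply: bridge.
- have [z zX' szt] := bridge s t (subsetP X''T s sX'') (subsetP X''T t tX'').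
  by right; right; exists z; rewrite ?(subsetP X'X'').
Qed.
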